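(* Let $\Omega\subset\mathbb{C}$ be a domain, $D=(\mu,\mathcal{A},\mathcal{B},\mathcal{F})\in\mathcal{BV}(\Omega)$ with $\|\mu\|_\infty<1$, and suppose there is a $C^1$ diffeomorphism $\Phi:\Omega\to\Omega'$ onto a domain $\Omega'$ satisfying $\Phi_{\bar z}=\mu\,\Phi_z$ on $\Omega$. Let $\Psi:=\Phi^{-1}:\Omega'\to\Omega$, with coordinate $\zeta$ on $\Omega'$. Then $\Psi^*D=(\mu',\mathcal{A}',\mathcal{B}',\mathcal{F}')$ has $\mu'\equiv0$, i.e. it is the Vekua equation $w_{\bar\zeta}+\mathcal{A}'w+\mathcal{B}'\bar w=\mathcal{F}'$ on $\Omega'$, with \[ \mathcal{A}'=\overline{\Psi_\zeta}\,(\mathcal{A}\circ\Psi),\qquad \mathcal{B}'=\overline{\Psi_\zeta}\,(\mathcal{B}\circ\Psi),\qquad \mathcal{F}'=\overline{\Psi_\zeta}\,(\mathcal{F}\circ\Psi). \] In particular $D$ is diffeomorphism-equivalent to a classical Vekua equation.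
   Context: A domain is an open connected subset of $\mathbb{C}$. $\mathcal{BV}(\Omega)$ is the set of quadruples $(\mu,\mathcal{A},\mathcal{B},\mathcal{F})$ of continuous complex functions on $\Omega$ with $|\mu|<1$ pointwise; the associated equation is $w_{\bar z}-\mu w_z+\mathcal{A}w+\mathcal{B}\bar w=\mathcal{F}$. A diffeomorphism $\Phi:\Omega_1\to\Omega_2$ is a $C^1$ bijection with $C^1$ inverse and Jacobian $J=|\Phi_z|^2-|\Phi_{\bar z}|^2>0$. For $D\in\mathcal{BV}(\Omega_2)$ the pullback $\Phi^*D=(\mu^*,\mathcal{A}^*,\mathcal{B}^*,\mathcal{F}^* )$ is given, with $K:=\Phi_z+(\mu\circ\Phi)\overline{\Phi_{\bar z}}$, by $\mu^*=(\Phi_{\bar z}+(\mu\circ\Phi)\overline{\Phi_z})/K$, $\mathcal{A}^*=J(\mathcal{A}\circ\Phi)/K$, $\mathcal{B}^*=J(\mathcal{B}\circ\Phi)/K$, $\mathcal{F}^*=J(\mathcal{F}\circ\Phi)/K$; $D_1\sim_d D_2$ means $D_1=\Phi^*D_2$ for some diffeomorphism $\Phi$. *)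

From Stdlib Require Import Reals.
From Coquelicot Require Import Coquelicot.
Open Scope R_scope.

Definition connected_set (O : C -> Prop) : Prop :=
  forall U V : C -> Prop, open U -> open V ->
    (forall z, O z -> U z \/ V z) ->
    (forall z, O z -> U z -> V z -> False) ->
    (exists z, O z /\ U z) -> (exists z, O z /\ V z) -> False.

Definition is_domain (O : C -> Prop) : Prop :=
  open O /\ connected_set O /\ exists z, O z.

Definition pdx (f : C -> C) (z : C) : C :=
  (Derive (fun t : R => Re (f (z + RtoC t)%C)) 0,
   Derive (fun t : R => Im (f (z + RtoC t)%C)) 0).
Definition pdy (f : C -> C) (z : C) : C :=
  (Derive (fun t : R => Re (f (z + (0, t))%C)) 0,
   Derive (fun t : R => Im (f (z + (0, t))%C)) 0).

Definition dz (f : C -> C) (z : C) : C := ((pdx f z - Ci * pdy f z) / 2)%C.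
Definition dzb (f : C -> C) (z : C) : C := ((pdx f z + Ci * pdy f z) / 2)%C.

Definition C1_on (O : C -> Prop) (f : C -> C) : Prop :=
  forall z, O z ->
    ex_derive (fun t : R => Re (f (z + RtoC t)%C)) 0 /\
    ex_derive (fun t : R => Im (f (z + RtoC t)%C)) 0 /\
    ex_derive (fun t : R => Re (f (z + (0, t))%C)) 0 /\
    ex_derive (fun t : R => Im (f (z + (0, t))%C)) 0 /\
    continuous (pdx f) z /\ continuous (pdy f) z.

Definition jac (f : C -> C) (z : C) : R := (Cmod (dz f z))^2 - (Cmod (dzb f z))^2.

Definition diffeo_pair (O1 O2 : C -> Prop) (Phi Psi : C -> C) : Prop :=
  (forall z, O1 z -> O2 (Phi z)) /\
  (forall w, O2 w -> O1 (Psi w)) /\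
  (forall z, O1 z -> Psi (Phi z) = z) /\
  (forall w, O2 w -> Phi (Psi w) = w) /\
  C1_on O1 Phi /\ C1_on O2 Psi /\
  (forall z, O1 z -> 0 < jac Phi z).

Definition diffeo (O1 O2 : C -> Prop) (Phi : C -> C) : Prop :=
  exists Psi, diffeo_pair O1 O2 Phi Psi.

(** Coefficient quadruples (mu, A, B, F) of w_zbar - mu w_z + A w + B wbar = F. *)
Record eqdata := EqData { emu : C -> C; eA : C -> C; eB : C -> C; eF : C -> C }.

Definition BV (O : C -> Prop) (D : eqdata) : Prop :=
  forall z, O z ->
    continuous (emu D) z /\ continuous (eA D) z /\
    continuous (eB D) z /\ continuous (eF D) z /\ Cmod (emu D z) < 1.

Definition Kfac (Phi : C -> C) (D : eqdata) (z : C) : C :=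
  (dz Phi z + emu D (Phi z) * Cconj (dzb Phi z))%C.

Definition pullback (Phi : C -> C) (D : eqdata) : eqdata :=
  EqData
    (fun z => ((dzb Phi z + emu D (Phi z) * Cconj (dz Phi z)) / Kfac Phi D z)%C)
    (fun z => (RtoC (jac Phi z) * eA D (Phi z) / Kfac Phi D z)%C)
    (fun z => (RtoC (jac Phi z) * eB D (Phi z) / Kfac Phi D z)%C)
    (fun z => (RtoC (jac Phi z) * eF D (Phi z) / Kfac Phi D z)%C).

Definition eqdata_on (O : C -> Prop) (D1 D2 : eqdata) : Prop :=
  forall z, O z ->
    emu D1 z = emu D2 z /\ eA D1 z = eA D2 z /\
    eB D1 z = eB D2 z /\ eF D1 z = eF D2 z.

Definition sim_d (O1 : C -> Prop) (D1 : eqdata) (O2 : C -> Prop) (D2 : eqdata) : Prop :=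
  exists Phi, diffeo O1 O2 Phi /\ eqdata_on O1 D1 (pullback Phi D2).

(* Since Psi is a left inverse of Phi, the chain rule makes the real Jacobian matrix of Psi
   at Phi z the inverse of that of Phi at z; in Wirtinger form this reads
   Psi_zeta = conj(Phi_z) / J and Psi_zetabar = - Phi_zbar / J at Phi z, with J the Jacobian
   of Phi.  Substituting Phi_zbar = mu Phi_z into the pullback formulas, the numerator of the
   new Beltrami coefficient vanishes, while the common denominator is
   conj(Phi_z) (1 - |mu|^2) / J, which is nonzero because |mu| < 1; the remaining quotients
   collapse to the factor conj(Psi_zeta).  The same identities show that pulling the
   resulting Vekua data back along Phi returns D. *)

From Stdlib Require Import Reals Lra.
From Coquelicot Require Import Coquelicot.
Open Scope R_scope.

Lemma continuous_C_components {T : UniformSpace} (f : T -> C) z :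
  continuous (fun x => Re (f x)) z -> continuous (fun x => Im (f x)) z ->
  continuous f z.
Proof.
  intros Hre Him.
  apply (continuous_ext (fun x => (Re (f x), Im (f x)))); [now intro x; destruct (f x) |].
  apply (continuous_comp_2 _ _ pair _ Hre Him).
  apply (continuous_ext (fun p => p)); [now intros [] | apply continuous_id].
Qed.

Lemma continuous_Re {T : UniformSpace} (f : T -> C) z :
  continuous f z -> continuous (fun x => Re (f x)) z.
Proof. intro Hf; apply (continuous_comp f Re z Hf); destruct (f z); apply continuous_fst. Qed.

Lemma continuous_Im {T : UniformSpace} (f : T -> C) z :
  continuous f z -> continuous (fun x => Im (f x)) z.
Proof. intro Hf; apply (continuous_comp f Im z Hf); destruct (f z); apply continuous_snd. Qed.

Lemma continuous_Rmult (f g : C -> R) z :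
  continuous f z -> continuous g z -> continuous (fun x => f x * g x) z.
Proof. exact (continuous_mult (K := R_AbsRing) f g z). Qed.

Lemma continuous_Cmult (f g : C -> C) z :
  continuous f z -> continuous g z -> continuous (fun x => (f x * g x)%C) z.
Proof.
  intros Hf Hg; apply continuous_C_components.
  - apply (continuous_ext (fun x => Re (f x) * Re (g x) - Im (f x) * Im (g x))); [easy |].
    apply (continuous_minus (V := R_NormedModule)); apply continuous_Rmult;
      now apply continuous_Re || apply continuous_Im.
  - apply (continuous_ext (fun x => Re (f x) * Im (g x) + Im (f x) * Re (g x))); [easy |].
    apply (continuous_plus (V := R_NormedModule)); apply continuous_Rmult;
      now apply continuous_Re || apply continuous_Im.
Qed.

Lemma continuous_Cconj (f : C -> C) z : continuous f z -> continuous (fun x => Cconj (f x)) z.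
Proof.
  intro Hf; apply continuous_C_components.
  - apply (continuous_ext (fun x => Re (f x))); [intro x; apply eq_sym, re_conj |].
    now apply continuous_Re.
  - apply (continuous_ext (fun x => - Im (f x))); [intro x; apply eq_sym, im_conj |].
    apply (continuous_opp (V := R_NormedModule)), continuous_Im, Hf.
Qed.

Lemma continuous_dz (O : C -> Prop) (f : C -> C) z : C1_on O f -> O z -> continuous (dz f) z.
Proof.
  intros Hf Hz; destruct (Hf z Hz) as (_ & _ & _ & _ & Hx & Hy).
  apply continuous_Cmult; [| apply continuous_const].
  apply (continuous_plus (V := C_NormedModule) _ _ _ Hx).
  apply (continuous_opp (V := C_NormedModule)), continuous_Cmult;
    [apply continuous_const | exact Hy].
Qed.

Lemma is_derive_translate (k : R -> R) x l :
  is_derive (fun t => k (x + t)) 0 l -> is_derive k x l.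
Proof.
  intro Hk.
  assert (Hshift : is_derive (fun s => s - x) x 1) by (auto_derive; [easy | ring]).
  rewrite <- (Rminus_diag x) in Hk.
  assert (Hcomp := is_derive_comp (fun t => k (x + t)) (fun s => s - x) x l 1 Hk Hshift).
  rewrite (scal_one (V := R_NormedModule)) in Hcomp.
  revert Hcomp; apply is_derive_ext; intro s; f_equal; ring.
Qed.

Lemma is_derive_partial_x (g : C -> R) u v l :
  is_derive (fun t => g ((u, v) + RtoC t)%C) 0 l -> is_derive (fun s => g (s, v)) u l.
Proof.
  intro Hg; apply is_derive_translate; revert Hg; apply is_derive_ext; intro t.
  unfold Cplus, RtoC; simpl; now rewrite Rplus_0_r.
Qed.

Lemma is_derive_partial_y (g : C -> R) u v l :
  is_derive (fun t => g ((u, v) + (0, t))%C) 0 l -> is_derive (fun s => g (u, s)) v l.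
Proof.
  intro Hg; apply is_derive_translate; revert Hg; apply is_derive_ext; intro t.
  unfold Cplus; simpl; now rewrite Rplus_0_r.
Qed.

Lemma differentiable_of_partials (O : C -> Prop) (g : C -> R) w :
  open O -> O w ->
  (forall z, O z ->
     ex_derive (fun t => g (z + RtoC t)%C) 0 /\ ex_derive (fun t => g (z + (0, t))%C) 0) ->
  continuous (fun z => Derive (fun t => g (z + RtoC t)%C) 0) w ->
  differentiable_pt_lim (fun u v => g (u, v)) (Re w) (Im w)
    (Derive (fun t => g (w + RtoC t)%C) 0) (Derive (fun t => g (w + (0, t))%C) 0).
Proof.
  intros HO Hw Hpartials Hcont; destruct w as [w1 w2].
  apply filterdiff_differentiable_pt_lim.
  eapply filterdiff_ext_lin.
  - apply (is_derive_filterdiff (fun u v => g (u, v)) w1 w2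
             (fun u v => Derive (fun t => g ((u, v) + RtoC t)%C) 0)).
    + apply (filter_imp O); [| exact (HO _ Hw)].
      intros [u1 u2] Hu; apply is_derive_partial_x, Derive_correct, (Hpartials _ Hu).
    + apply is_derive_partial_y, Derive_correct, (Hpartials _ Hw).
    + revert Hcont; apply continuous_ext; now intros [].
  - easy.
Qed.

Lemma C1_on_differentiable (O : C -> Prop) (f : C -> C) w :
  open O -> C1_on O f -> O w ->
  differentiable_pt_lim (fun u v => Re (f (u, v))) (Re w) (Im w) (Re (pdx f w)) (Re (pdy f w)) /\
  differentiable_pt_lim (fun u v => Im (f (u, v))) (Re w) (Im w) (Im (pdx f w)) (Im (pdy f w)).
Proof.
  intros HO Hf Hw; destruct (Hf w Hw) as (_ & _ & _ & _ & Hx & _).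
  split.
  - apply (differentiable_of_partials O (fun p => Re (f p))); auto.
    + intros z Hz; destruct (Hf z Hz) as (? & _ & ? & _); now split.
    + exact (continuous_Re _ _ Hx).
  - apply (differentiable_of_partials O (fun p => Im (f p))); auto.
    + intros z Hz; destruct (Hf z Hz) as (_ & ? & _ & ? & _); now split.
    + exact (continuous_Im _ _ Hx).
Qed.

Lemma C1_on_continuous (O : C -> Prop) (f : C -> C) w :
  open O -> C1_on O f -> O w -> continuous f w.
Proof.
  intros HO Hf Hw; destruct (C1_on_differentiable O f w HO Hf Hw) as [Hre Him].
  apply continuous_C_components;
    [ apply (continuous_ext (fun p => Re (f (fst p, snd p))))
    | apply (continuous_ext (fun p => Im (f (fst p, snd p)))) ];
    try (now intros []);
    destruct w as [w1 w2]; apply (continuity_2d_pt_filterlim (fun u v => _ (f (u, v))));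
    apply differentiable_continuity_pt; eexists; eexists; eassumption.
Qed.

Lemma is_derive_comp_2d (g : C -> R) (gamma : R -> C) t0 gx gy l1 l2 :
  differentiable_pt_lim (fun u v => g (u, v)) (Re (gamma t0)) (Im (gamma t0)) gx gy ->
  is_derive (fun t => Re (gamma t)) t0 l1 -> is_derive (fun t => Im (gamma t)) t0 l2 ->
  is_derive (fun t => g (gamma t)) t0 (gx * l1 + gy * l2).
Proof.
  intros Hg H1 H2; apply is_derive_Reals in H1, H2.
  generalize (proj2 (is_derive_Reals _ _ _) (derivable_pt_lim_comp_2d _ _ _ _ _ _ _ _ Hg H1 H2)).
  apply is_derive_ext; intro t; now destruct (gamma t).
Qed.

Lemma Cconj_RtoC (r : R) : Cconj (RtoC r) = RtoC r.
Proof. unfold Cconj, RtoC; simpl; f_equal; ring. Qed.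

Lemma RtoC_neq_0 (r : R) : r <> 0 -> RtoC r <> 0%C.
Proof. intros Hr E; apply Hr; now injection E. Qed.

Lemma Cconj_neq_0 (a : C) : a <> 0%C -> Cconj a <> 0%C.
Proof. intros Ha E; apply Ha; now rewrite <- (Cconj_conj a), E, Cconj_RtoC. Qed.

Lemma jac_partials (f : C -> C) z :
  jac f z = Re (pdx f z) * Im (pdy f z) - Im (pdx f z) * Re (pdy f z).
Proof.
  unfold jac, dz, dzb; destruct (pdx f z) as [a1 a2], (pdy f z) as [b1 b2].
  rewrite !Cmod2_alt; unfold Cdiv, Cinv, Cminus, Cplus, Copp, Cmult, Ci, RtoC; simpl; field.
Qed.

Lemma wirtinger_of_inverse_jacobian (ax ay px py : C) :
  let d := Re ax * Im ay - Im ax * Re ay in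
  d <> 0 ->
  (RtoC (Re ax) * px + RtoC (Im ax) * py = 1)%C ->
  (RtoC (Re ay) * px + RtoC (Im ay) * py = Ci)%C ->
  ((px - Ci * py) / 2 = Cconj ((ax - Ci * ay) / 2) / RtoC d)%C /\
  ((px + Ci * py) / 2 = - ((ax + Ci * ay) / 2) / RtoC d)%C.
Proof.
  intros d Hd E1 E2.
  assert (Hd' := RtoC_neq_0 d Hd).
  (* Cramer's rule for the real 2x2 system in the complex unknowns px, py. *)
  assert (Hpx : (px * RtoC d = RtoC (Im ay) * 1 - RtoC (Im ax) * Ci)%C)
    by (rewrite <- E1, <- E2; unfold d; rewrite RtoC_minus, !RtoC_mult; ring).
  assert (Hpy : (py * RtoC d = RtoC (Re ax) * Ci - RtoC (Re ay) * 1)%C)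
    by (rewrite <- E1, <- E2; unfold d; rewrite RtoC_minus, !RtoC_mult; ring).
  replace px with ((RtoC (Im ay) * 1 - RtoC (Im ax) * Ci) / RtoC d)%C
    by (rewrite <- Hpx; field; exact Hd').
  replace py with ((RtoC (Re ax) * Ci - RtoC (Re ay) * 1) / RtoC d)%C
    by (rewrite <- Hpy; field; exact Hd').
  unfold d in *; destruct ax as [a1 a2], ay as [b1 b2]; simpl in *.
  split; apply injective_projections;
    unfold Cdiv, Cinv, Cminus, Cplus, Copp, Cmult, Cconj, Ci, RtoC; simpl; field; auto.
Qed.

Lemma jac_wirtinger (f : C -> C) z :
  RtoC (jac f z) = (dz f z * Cconj (dz f z) - dzb f z * Cconj (dzb f z))%C.
Proof. unfold jac; now rewrite RtoC_minus, !Cmod2_conj. Qed.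

Lemma Cneq_0_of_jacobian (a b mu : C) (J : R) :
  b = (mu * a)%C -> RtoC J = (a * Cconj a - b * Cconj b)%C -> J <> 0 -> a <> 0%C.
Proof.
  intros Hb HJ HJ0 Ha; apply HJ0, RtoC_inj; rewrite HJ, Hb, Ha; ring.
Qed.

Lemma inverse_pullback_coefficients (a b c d mu : C) (J : R) :
  b = (mu * a)%C -> Cmod mu < 1 -> RtoC J = (a * Cconj a - b * Cconj b)%C -> J <> 0 ->
  c = (Cconj a / RtoC J)%C -> d = (- b / RtoC J)%C ->
  ((d + mu * Cconj c) / (c + mu * Cconj d) = 0)%C /\
  (forall X, ((c * Cconj c - d * Cconj d) * X / (c + mu * Cconj d) = Cconj c * X)%C).
Proof.
  intros Hb Hmu HJ HJ0 Hc Hd.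
  assert (Ha := Cneq_0_of_jacobian a b mu J Hb HJ HJ0).
  assert (HJ' := RtoC_neq_0 J HJ0).
  assert (Hmu' : (1 - mu * Cconj mu)%C <> 0%C).
  { rewrite <- Cmod2_conj, <- RtoC_minus; apply RtoC_neq_0.
    assert (0 <= Cmod mu) by apply Cmod_ge_0; nra. }
  assert (Hcc : Cconj c = (a / RtoC J)%C)
    by (rewrite Hc, Cdiv_conj, Cconj_conj, Cconj_RtoC; auto).
  assert (Hdc : Cconj d = (- (Cconj mu * Cconj a) / RtoC J)%C)
    by (rewrite Hd, Hb, Cdiv_conj, Copp_conj, Cmult_conj, Cconj_RtoC; auto).
  assert (HK : (c + mu * Cconj d = Cconj a * (1 - mu * Cconj mu) / RtoC J)%C)
    by (rewrite Hc, Hdc; field; auto).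
  rewrite HK, Hcc, Hdc, Hc, Hd, Hb; split; [| intro X]; field; repeat split; auto using Cconj_neq_0.
Qed.

Lemma vekua_pullback_coefficients (a b c mu : C) (J : R) :
  b = (mu * a)%C -> RtoC J = (a * Cconj a - b * Cconj b)%C -> J <> 0 ->
  c = (Cconj a / RtoC J)%C ->
  (mu = (b + 0 * Cconj a) / (a + 0 * Cconj b))%C /\
  (forall X, X = (RtoC J * (Cconj c * X) / (a + 0 * Cconj b))%C).
Proof.
  intros Hb HJ HJ0 Hc.
  assert (Ha := Cneq_0_of_jacobian a b mu J Hb HJ HJ0).
  assert (HJ' := RtoC_neq_0 J HJ0).
  rewrite Hc, Cdiv_conj, Cconj_conj, Cconj_RtoC, Hb by auto.
  split; [| intro X]; field; auto.
Qed.

Section Inverse_map.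

Variables (O O' : C -> Prop) (Phi Psi : C -> C).
Hypotheses (HO : open O) (HO' : open O') (Phi_C1 : C1_on O Phi) (Psi_C1 : C1_on O' Psi)
  (Phi_maps : forall z, O z -> O' (Phi z)) (PsiK : forall z, O z -> Psi (Phi z) = z).

Lemma left_inverse_directional z (gamma : R -> C) (e : C) :
  O z -> gamma 0 = z ->
  is_derive (fun t => Re (gamma t)) 0 (Re e) -> is_derive (fun t => Im (gamma t)) 0 (Im e) ->
  ex_derive (fun t => Re (Phi (gamma t))) 0 -> ex_derive (fun t => Im (Phi (gamma t))) 0 ->
  (RtoC (Derive (fun t => Re (Phi (gamma t))) 0) * pdx Psi (Phi z)
   + RtoC (Derive (fun t => Im (Phi (gamma t))) 0) * pdy Psi (Phi z) = e)%C.
Proof.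
  intros Hz Hg0 Hre Him Hx Hy; subst z.
  assert (Hnear : locally 0 (fun t => Psi (Phi (gamma t)) = gamma t)).
  { assert (Hcont : continuous gamma 0)
      by (apply (continuous_C_components gamma);
          apply (ex_derive_continuous (V := R_NormedModule)); eexists; eassumption).
    apply (filter_imp (fun t => O (gamma t))); [auto | apply Hcont, HO, Hz]. }
  destruct (C1_on_differentiable O' Psi _ HO' Psi_C1 (Phi_maps _ Hz)) as [Dre Dim].
  destruct Hx as [a Ha], Hy as [b Hb].
  replace (Derive (fun t => Re (Phi (gamma t))) 0) with a by (symmetry; now apply is_derive_unique).
  replace (Derive (fun t => Im (Phi (gamma t))) 0) with b by (symmetry; now apply is_derive_unique).
  assert (Ere := is_derive_comp_2d (fun p => Re (Psi p)) _ 0 _ _ _ _ Dre Ha Hb).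
  assert (Eim := is_derive_comp_2d (fun p => Im (Psi p)) _ 0 _ _ _ _ Dim Ha Hb).
  apply (is_derive_ext_loc _ (fun t => Re (gamma t))) in Ere;
    [| revert Hnear; apply filter_imp; intros t Ht; now rewrite Ht].
  apply (is_derive_ext_loc _ (fun t => Im (gamma t))) in Eim;
    [| revert Hnear; apply filter_imp; intros t Ht; now rewrite Ht].
  apply is_derive_unique in Hre, Him, Ere, Eim.
  rewrite Hre in Ere; rewrite Him in Eim; revert Ere Eim.
  destruct (pdx Psi (Phi (gamma 0))) as [p1 p2], (pdy Psi (Phi (gamma 0))) as [q1 q2], e.
  intros Ere Eim; apply injective_projections; simpl in *; lra.
Qed.

Lemma left_inverse_partials z : O z ->
  (RtoC (Re (pdx Phi z)) * pdx Psi (Phi z) + RtoC (Im (pdx Phi z)) * pdy Psi (Phi z) = 1)%C /\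
  (RtoC (Re (pdy Phi z)) * pdx Psi (Phi z) + RtoC (Im (pdy Phi z)) * pdy Psi (Phi z) = Ci)%C.
Proof.
  intro Hz; destruct (Phi_C1 z Hz) as (Hx1 & Hx2 & Hy1 & Hy2 & _); split.
  - apply (left_inverse_directional z (fun t => z + RtoC t)%C); auto; [apply Cplus_0_r | |];
      destruct z; unfold Cplus, RtoC, Re, Im; simpl; auto_derive; auto; ring.
  - apply (left_inverse_directional z (fun t => z + (0, t))%C); auto; [apply Cplus_0_r | |];
      destruct z; unfold Cplus, Ci, Re, Im; simpl; auto_derive; auto; ring.
Qed.

Lemma wirtinger_of_inverse z : O z -> jac Phi z <> 0 ->
  dz Psi (Phi z) = (Cconj (dz Phi z) / RtoC (jac Phi z))%C /\
  dzb Psi (Phi z) = (- dzb Phi z / RtoC (jac Phi z))%C.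
Proof.
  intros Hz HJ; rewrite jac_partials in *.
  destruct (left_inverse_partials z Hz); now apply wirtinger_of_inverse_jacobian.
Qed.

End Inverse_map.

Definition vekua_form (Psi : C -> C) (D : eqdata) : eqdata :=
  EqData (fun _ => 0%C)
    (fun w => (Cconj (dz Psi w) * eA D (Psi w))%C)
    (fun w => (Cconj (dz Psi w) * eB D (Psi w))%C)
    (fun w => (Cconj (dz Psi w) * eF D (Psi w))%C).

Section Straightening.

Variables (O O' : C -> Prop) (D : eqdata) (Phi Psi : C -> C).
Hypotheses (HO : open O) (HO' : open O') (HD : BV O D) (Hpair : diffeo_pair O O' Phi Psi)
  (beltrami : forall z, O z -> dzb Phi z = (emu D z * dz Phi z)%C).

Lemma wirtinger_of_diffeo_inverse z : O z ->
  dz Psi (Phi z) = (Cconj (dz Phi z) / RtoC (jac Phi z))%C /\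
  dzb Psi (Phi z) = (- dzb Phi z / RtoC (jac Phi z))%C.
Proof.
  intro Hz; destruct Hpair as (Phi_maps & _ & PsiK & _ & Phi_C1 & Psi_C1 & jac_pos).
  apply (wirtinger_of_inverse O O'); auto.
  now apply Rgt_not_eq, jac_pos.
Qed.

Lemma pullback_inverse_vekua : eqdata_on O' (pullback Psi D) (vekua_form Psi D).
Proof.
  intros w Hw; destruct Hpair as (_ & Psi_maps & PsiK & PhiK & _ & _ & jac_pos).
  rewrite <- (PhiK w Hw); generalize (Psi w) (Psi_maps w Hw); clear w Hw; intros z Hz.
  destruct (HD z Hz) as (_ & _ & _ & _ & Hmu_lt_1).
  destruct (wirtinger_of_diffeo_inverse z Hz) as [Hdz Hdzb].
  destruct (inverse_pullback_coefficients _ _ _ _ (emu D z) _ (beltrami z Hz) Hmu_lt_1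
              (jac_wirtinger Phi z) (Rgt_not_eq _ _ (jac_pos z Hz)) Hdz Hdzb) as [Hmu HX].
  unfold pullback, vekua_form, Kfac; simpl; rewrite PsiK, jac_wirtinger by exact Hz.
  repeat split; auto.
Qed.

Lemma pullback_vekua_form : eqdata_on O D (pullback Phi (vekua_form Psi D)).
Proof.
  intros z Hz; destruct Hpair as (_ & _ & PsiK & _ & _ & _ & jac_pos).
  destruct (wirtinger_of_diffeo_inverse z Hz) as [Hdz _].
  destruct (vekua_pullback_coefficients _ _ _ (emu D z) _ (beltrami z Hz) (jac_wirtinger Phi z)
              (Rgt_not_eq _ _ (jac_pos z Hz)) Hdz) as [Hmu HX].
  unfold pullback, vekua_form, Kfac; simpl; rewrite PsiK by exact Hz.
  repeat split; auto.
Qed.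

Lemma BV_vekua_form : BV O' (vekua_form Psi D).
Proof.
  intros w Hw; destruct Hpair as (_ & Psi_maps & _ & _ & _ & Psi_C1 & _).
  destruct (HD (Psi w) (Psi_maps w Hw)) as (_ & HA & HB & HF & _).
  assert (Hconj : continuous (fun x => Cconj (dz Psi x)) w)
    by exact (continuous_Cconj _ _ (continuous_dz O' Psi w Psi_C1 Hw)).
  assert (HPsi := C1_on_continuous O' Psi w HO' Psi_C1 Hw).
  unfold vekua_form; simpl; rewrite Cmod_0.
  repeat split; try lra; try apply continuous_const;
    apply continuous_Cmult; auto; now apply continuous_comp.
Qed.

End Straightening.

Theorem proposition6p1 (O O' : C -> Prop) (D : eqdata) (Phi Psi : C -> C) :
  is_domain O -> is_domain O' -> BV O D ->
  (exists k : R, k < 1 /\ forall z, O z -> Cmod (emu D z) <= k) ->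
  diffeo_pair O O' Phi Psi ->
  (forall z, O z -> dzb Phi z = (emu D z * dz Phi z)%C) ->
  let D' := EqData (fun _ => 0%C)
              (fun w => (Cconj (dz Psi w) * eA D (Psi w))%C)
              (fun w => (Cconj (dz Psi w) * eB D (Psi w))%C)
              (fun w => (Cconj (dz Psi w) * eF D (Psi w))%C) in
  eqdata_on O' (pullback Psi D) D' /\ BV O' D' /\ sim_d O D O' D'.
Proof.
  (* The pointwise bound |mu| < 1 contained in BV suffices. *)
  intros [HO _] [HO' _] HD _ Hpair beltrami D'.
  split; [| split].
  - exact (pullback_inverse_vekua O O' D Phi Psi HO HO' HD Hpair beltrami).
  - exact (BV_vekua_form O O' D Phi Psi HO' HD Hpair).
  - exists Phi; split; [now exists Psi |].
    exact (pullback_vekua_form O O' D Phi Psi HO HO' Hpair beltrami).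
Qed.
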